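(* Let $\ket{\psi}$ be a pure state on a tripartite system $ABC$. Let a quantum instrument (measurement channel) $\mathcal{N}$ with Kraus operators $\{M_i\}_{i=1}^k$ acting on $B$ ($\sum_i M_i^\dagger M_i=I$) be applied, recording the outcome in a classical register $X$, giving the state $\rho_{A\mathcal{N}[B]C}=\sum_i p_i \ket{\psi_i}\bra{\psi_i}\otimes\ket{i}\bra{i}_X$ with $p_i=\|M_i\ket{\psi}\|^2$, $\ket{\psi_i}=M_i\ket{\psi}/\sqrt{p_i}$. Let $\delta I=I(A:C|\mathcal{N}[B])-I(A:C|B)$ (first term in $\rho_{A\mathcal{N}[B]C}$, second in $\ket{\psi}$). Then $$\delta I\le S(A\,\mathcal{N}[B]\,C),$$ and moreover $S(A\,\mathcal{N}[B]\,C)=-\sum_{i}p_i\log p_i$ is the Shannon entropy of the measurement outcome distribution.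
   Context: The quantum conditional mutual information is $I(A:C|B)=S(AB)+S(BC)-S(B)-S(ABC)$ with von Neumann entropies. $\mathcal{N}[B]$ denotes $B$ together with the classical register $X$ (orthonormal basis $\{\ket{i}\}$), and $S(A\,\mathcal{N}[B]\,C)$ is the von Neumann entropy of $\rho_{A\mathcal{N}[B]C}$. *)

From mathcomp Require Import all_boot all_algebra spectral.
From mathcomp.real_closed Require Import complex.
From mathcomp Require Import reals exp.
Set Implicit Arguments. Unset Strict Implicit. Unset Printing Implicit Defensive.
Import GRing.Theory Num.Theory.
Local Open Scope ring_scope.

Section QInfo.
Variable R : realType.
Local Notation C := (R[i]).

(* A (finite-dimensional) operator on the Hilbert space with orthonormal
   basis indexed by the finite type T, given by its matrix entries. *)
Definition op (T : finType) := T -> T -> C.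

Definition opmx (T : finType) (rho : op T) : 'M[C]_#|T| :=
  \matrix_(i, j) rho (enum_val i) (enum_val j).

(* Von Neumann entropy S(rho) = - sum_l l ln l over the eigenvalues l of rho
   (spectral decomposition of the normal matrix opmx rho); 0 ln 0 = 0. *)
Definition vN_entropy (T : finType) (rho : op T) : R :=
  - \sum_(j < #|T|)
      (complex.Re (spectral_diag (opmx rho) 0 j) *
       ln (complex.Re (spectral_diag (opmx rho) 0 j))).

Definition ptr_XY (X Y Z : finType) (rho : op (X * Y * Z)%type) : op (X * Y)%type :=
  fun u v => \sum_(z : Z) rho (u, z) (v, z).
Definition ptr_YZ (X Y Z : finType) (rho : op (X * Y * Z)%type) : op (Y * Z)%type :=
  fun u v => \sum_(x : X) rho (x, u.1, u.2) (x, v.1, v.2).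
Definition ptr_Y (X Y Z : finType) (rho : op (X * Y * Z)%type) : op Y :=
  fun u v => \sum_(x : X) \sum_(z : Z) rho (x, u, z) (x, v, z).

Definition qcmi (X Y Z : finType) (rho : op (X * Y * Z)%type) : R :=
  vN_entropy (ptr_XY rho) + vN_entropy (ptr_YZ rho)
  - vN_entropy (ptr_Y rho) - vN_entropy rho.

Definition ketbra (T : finType) (psi : T -> C) : op T :=
  fun s t => psi s * (psi t)^*.

Definition apply_kraus (A B Cs : finType) (k : nat) (M : 'I_k -> op B)
    (psi : (A * B * Cs)%type -> C) (i : 'I_k) : (A * B * Cs)%type -> C :=
  fun t => \sum_(b0 : B) M i t.1.2 b0 * psi (t.1.1, b0, t.2).

Definition outcome_prob (A B Cs : finType) (k : nat) (M : 'I_k -> op B)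
    (psi : (A * B * Cs)%type -> C) (i : 'I_k) : R :=
  complex.Re (\sum_(t : (A * B * Cs)%type) `|apply_kraus M psi i t| ^+ 2).

(* The state rho_{A N[B] C} = sum_i p_i |psi_i><psi_i| (x) |i><i|_X
   = sum_i M_i|psi><psi|M_i^dagger (x) |i><i|_X, where N[B] = B * X and
   the classical register X has basis 'I_k. *)
Definition post_meas_state (A B Cs : finType) (k : nat) (M : 'I_k -> op B)
    (psi : (A * B * Cs)%type -> C) : op (A * (B * 'I_k) * Cs)%type :=
  fun s t =>
    if s.1.2.2 == t.1.2.2 then
      apply_kraus M psi s.1.2.2 (s.1.1, s.1.2.1, s.2) *
      (apply_kraus M psi t.1.2.2 (t.1.1, t.1.2.1, t.2))^*
    else 0.

End QInfo.

From mathcomp Require Import all_boot all_algebra spectral.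
From mathcomp.real_closed Require Import complex.
From mathcomp Require Import reals exp.
From mathcomp Require Import order ring lra.
Set Implicit Arguments. Unset Strict Implicit. Unset Printing Implicit Defensive.
Import Order.TTheory GRing.Theory Num.Theory.
Local Open Scope ring_scope.

(** Write [v_i = M_i psi], so that [p_i = |v_i|^2].  The register makes [rho_{A N[B] C}] and its
    marginals containing [N[B]] block diagonal in [i], so [S(A N[B] C) = H(p)], and, since
    [V V^*] and [V^* V] have the same nonzero spectrum, [S(A N[B]) = sum_i S(C)_{v_i}],
    [S(N[B] C) = sum_i S(A)_{v_i}] and [S(N[B]) = sum_i S(AC)_{v_i}] (unnormalized states).
    For the pure state [psi], [I(A:C|B) = S(C) + S(A) - S(AC)]; as the instrument acts on [B]
    and is trace preserving, each of these marginals of [psi] is the sum over [i] of the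
    corresponding marginals of the [v_i].  Concavity in the form
    [sum_i S(sigma_i) <= S(sum_i sigma_i) + H(p)] for [C] and [A], with
    [S(sum_i sigma_i) <= sum_i S(sigma_i)] for [AC], gives [delta I <= H(p)].  Through spectral
    decompositions, both inequalities reduce to Jensen's inequality for [x ln x] and to
    subadditivity of Shannon entropy. *)

Lemma char_poly_mulmxC (F : comNzRingType) m n (A : 'M[F]_(m, n)) (B : 'M[F]_(n, m)) :
  'X^n * char_poly (A *m B) = 'X^m * char_poly (B *m A).
Proof.
set a := map_mx polyC A; set b := map_mx polyC B.
pose N := block_mx ('X%:M : 'M_m) a b (1%:M : 'M_n).
pose L1 := block_mx (1%:M : 'M_m) (- a) 0 (1%:M : 'M_n).
pose L2 := block_mx (1%:M : 'M_m) 0 (- b) ('X%:M : 'M_n).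
have L1N : L1 *m N = block_mx ('X%:M - a *m b) 0 b 1%:M.
  by rewrite mulmx_block !mul1mx !mul0mx !add0r mulNmx mulmx1 subrr.
have L2N : L2 *m N = block_mx 'X%:M a 0 ('X%:M - b *m a).
  rewrite mulmx_block !mul1mx !mul0mx !addr0 mulNmx mulmx1.
  by rewrite mul_mx_scalar mul_scalar_mx addNr mulNmx addrC.
have detN : \det N = char_poly (A *m B).
  have := congr1 determinant L1N.
  rewrite det_mulmx det_ublock det_lblock !det1 mul1r mulr1 mul1r => ->.
  by rewrite /char_poly /char_poly_mx map_mxM.
have := congr1 determinant L2N.
rewrite det_mulmx det_lblock det_ublock det1 mul1r !det_scalar detN => ->.
by rewrite /char_poly /char_poly_mx map_mxM.
Qed.

Section NormalSpectrum.
Variable C : numClosedFieldType.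
Local Open Scope sesquilinear_scope.

Lemma char_poly_normalmx n (M : 'M[C]_n) : M \is normalmx ->
  char_poly M = \prod_(j < n) ('X - (spectral_diag M 0 j)%:P).
Proof.
move=> /orthomx_spectralP defM.
have Xn_neq0 : ('X^n : {poly C}) != 0 by rewrite monic_neq0 ?monicXn.
have := char_poly_mulmxC (invmx (spectralmx M) *m diag_mx (spectral_diag M)) (spectralmx M).
rewrite -defM mulmxA mulmxV ?spectral_unit // mul1mx => /(mulfI Xn_neq0) ->.
rewrite char_poly_trig; last exact/is_diag_mx_is_trig/diag_mx_is_diag.
by apply: eq_bigr => j _; rewrite mxE eqxx mulr1n.
Qed.

Lemma mulmx_trmxC_normal m n (A : 'M[C]_(m, n)) : A *m A^t* \is normalmx.
Proof. by apply/normalmxP; rewrite trmx_mul map_mxM trmxCK. Qed.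

Variables (V : zmodType) (f : C -> V).

Lemma sum_spectral_diag_seq n k (M : 'M[C]_n) (s : seq C) : f 0 = 0 -> M \is normalmx ->
  'X^k * char_poly M = \prod_(x <- s) ('X - x%:P) ->
  \sum_(j < n) f (spectral_diag M 0 j) = \sum_(x <- s) f x.
Proof.
move=> f0 /char_poly_normalmx -> chiM.
pose s' := [seq spectral_diag M 0 j | j <- enum 'I_n] ++ nseq k 0.
have s's : perm_eq s' s.
  apply: prod_XsubC_eq; rewrite -chiM big_cat big_map big_enum /= big_nseq.
  by rewrite subr0 iter_mulr mulr1 mulrC.
rewrite -(perm_big _ s's).
by rewrite big_cat /= big_map big_enum big_nseq f0 iter_addr mul0rn !addr0.
Qed.

Lemma sum_spectral_diag_char_poly n m (M : 'M[C]_n) (N : 'M[C]_m) :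
  f 0 = 0 -> M \is normalmx -> N \is normalmx ->
  'X^m * char_poly M = 'X^n * char_poly N ->
  \sum_(j < n) f (spectral_diag M 0 j) = \sum_(j < m) f (spectral_diag N 0 j).
Proof.
move=> f0 nM /char_poly_normalmx chiN chiMN.
rewrite (sum_spectral_diag_seq (k := m)
  (s := [seq spectral_diag N 0 j | j <- enum 'I_m] ++ nseq n 0) f0 nM).
  by rewrite big_cat /= big_map big_enum big_nseq f0 iter_addr mul0rn !addr0.
rewrite chiMN chiN big_cat big_map big_enum big_nseq /= subr0 iter_mulr.
by rewrite mulr1 mulrC.
Qed.

End NormalSpectrum.

Section XlnX.
Variable R : realType.

Definition xlnx (x : R) := x * ln x.

Lemma xln_ratio_le_sub (x y : R) : 0 <= x -> 0 < y -> x * ln y - x * ln x <= y - x.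
Proof.
rewrite le_eqVlt => /predU1P [<- | x_gt0] y_gt0; first by rewrite !mul0r subrr subr0 ltW.
have x_pos : x \is Num.pos by rewrite posrE.
have y_pos : y \is Num.pos by rewrite posrE.
have : ln (1 + (y / x - 1)) <= y / x - 1.
  by apply: le_ln1Dx; have := divr_gt0 y_gt0 x_gt0; lra.
rewrite addrC subrK ln_div // => /(ler_wpM2l (ltW x_gt0)).
by rewrite !mulrBr mulr1 mulrCA divff ?mulr1 ?gt_eqF.
Qed.

Lemma xlnx_convex (J : finType) (w x : J -> R) :
  (forall j, 0 <= w j) -> (forall j, 0 <= x j) -> \sum_j w j = 1 ->
  xlnx (\sum_j w j * x j) <= \sum_j w j * xlnx (x j).
Proof.
move=> w_ge0 x_ge0 w1; set m := \sum_j w j * x j.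
have wx_ge0 j : 0 <= w j * x j by exact: mulr_ge0.
have : 0 <= m by exact: sumr_ge0.
rewrite le_eqVlt => /predU1P [m0 | m_gt0].
  have wx0 j : w j * x j = 0.
    exact: (psumr_eq0P (P := predT) (fun j _ => wx_ge0 j) (esym m0)).
  rewrite /xlnx -m0 mul0r; apply: sumr_ge0 => j _.
  by rewrite /xlnx mulrA wx0 mul0r.
have : \sum_j w j * (x j * ln m - xlnx (x j)) <= \sum_j w j * (m - x j).
  by apply: ler_sum => j _; apply: ler_wpM2l => //; exact: xln_ratio_le_sub.
have -> : \sum_j w j * (m - x j) = 0.
  under eq_bigr do rewrite mulrBr.
  by rewrite sumrB -mulr_suml w1 mul1r subrr.
rewrite (eq_bigr (fun j => w j * x j * ln m - w j * xlnx (x j))); last first.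
  by move=> j _; rewrite mulrBr mulrA.
by rewrite sumrB -mulr_suml subr_le0.
Qed.

Lemma xlnx_subadditive (I J : finType) (d : I -> J -> R) :
  (forall i j, 0 <= d i j) -> \sum_i \sum_j d i j = 1 ->
  \sum_i xlnx (\sum_j d i j) + \sum_j xlnx (\sum_i d i j)
    <= \sum_i \sum_j xlnx (d i j).
Proof.
move=> d_ge0 d1; pose p i := \sum_j d i j; pose q j := \sum_i d i j.
have le_p i j : d i j <= p i by rewrite /p (bigD1 j) //= lerDl sumr_ge0.
have le_q i j : d i j <= q j by rewrite /q (bigD1 i) //= lerDl sumr_ge0.
have gibbs i j :
    d i j * ln (p i) + d i j * ln (q j) - xlnx (d i j) <= p i * q j - d i j.
  have := d_ge0 i j; rewrite le_eqVlt => /predU1P [<- | d_gt0].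
    by rewrite /xlnx !mul0r !addr0 subrr subr0 mulr_ge0 // (le_trans (d_ge0 i j)).
  have [p_gt0 q_gt0] := (lt_le_trans d_gt0 (le_p i j), lt_le_trans d_gt0 (le_q i j)).
  by rewrite -mulrDr -lnM ?posrE // xln_ratio_le_sub ?ltW ?mulr_gt0.
have : \sum_i \sum_j (d i j * ln (p i) + d i j * ln (q j) - xlnx (d i j))
       <= \sum_i \sum_j (p i * q j - d i j).
  by apply: ler_sum => i _; apply: ler_sum => j _; exact: gibbs.
have -> : \sum_i \sum_j (p i * q j - d i j) = 0.
  have q1 : \sum_j q j = 1 by rewrite /q exchange_big.
  by rewrite big1 // => i _; rewrite sumrB -mulr_sumr q1 mulr1 subrr.
rewrite (eq_bigr (fun i => xlnx (p i) + \sum_j d i j * ln (q j) - \sum_j xlnx (d i j))).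
  rewrite sumrB big_split exchange_big /= subr_le0.
  by under [X in _ + X <= _]eq_bigr do rewrite -mulr_suml.
by move=> i _; rewrite sumrB big_split /xlnx -mulr_suml.
Qed.

End XlnX.

Lemma sum_enum_val (V : nmodType) (T : finType) (F : T -> V) :
  \sum_t F t = \sum_(i < #|T|) F (enum_val i).
Proof. by rewrite -big_enum_val. Qed.

Lemma sum_pair (V : nmodType) (I J : finType) (F : I * J -> V) :
  \sum_p F p = \sum_i \sum_j F (i, j).
Proof. by rewrite pair_bigA; apply: eq_bigr => -[]. Qed.

Lemma sum_triple (V : nmodType) (X Y Z : finType) (F : X * Y * Z -> V) :
  \sum_t F t = \sum_x \sum_y \sum_z F (x, y, z).
Proof. by rewrite sum_pair sum_pair. Qed.

Section Operators.
Variable R : realType.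
Local Notation C := (R[i]).
Local Open Scope sesquilinear_scope.

Definition outer (K T : finType) (v : K -> T -> C) : op R T :=
  fun s t => \sum_k v k s * (v k t)^*.
Definition gram (K T : finType) (v : K -> T -> C) : op R K :=
  fun k k' => \sum_t (v k t)^* * v k' t.
Definition vecs_mx (K T : finType) (v : K -> T -> C) : 'M[C]_(#|T|, #|K|) :=
  \matrix_(j, l) v (enum_val l) (enum_val j).

Definition selfadjoint (T : finType) (rho : op R T) :=
  forall s t, rho t s = (rho s t)^*.
Definition eigval (T : finType) (rho : op R T) (l : 'I_#|T|) : C :=
  spectral_diag (opmx rho) 0 l.
(* [opmx rho = spectralmx^-1 *m diag *m spectralmx] with [spectralmx] unitary, so the
   conjugated rows of [spectralmx] are the eigenvectors. *)
Definition eigvec (T : finType) (rho : op R T) (l : 'I_#|T|) (t : T) : C :=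
  (spectralmx (opmx rho) l (enum_rank t))^*.

Definition dotv (T : finType) (f g : T -> C) := \sum_t (f t)^* * g t.
Definition qform (T : finType) (rho : op R T) (f g : T -> C) :=
  \sum_s \sum_t (f s)^* * rho s t * g t.

Lemma sum_delta (I : finType) (F : I -> C) j : \sum_i (i == j)%:R * F i = F j.
Proof. by rewrite (bigD1 j) //= eqxx mul1r big1 ?addr0 // => i /negPf ->; rewrite mul0r. Qed.

Lemma sum_tagged_outer (I : finType) (i i' : I) (a b : I -> C) :
  \sum_j ((i == j)%:R * a j) * ((i' == j)%:R * b j)^* = if i == i' then a i * (b i')^* else 0.
Proof.
rewrite (eq_bigr (fun j => (j == i)%:R * ((i' == i)%:R * (a i * (b i)^*)))).
  by rewrite sum_delta; case: eqVneq => [<-|_]; rewrite ?mul1r ?mul0r.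
move=> j _; case: eqVneq => [->|_]; last by rewrite !mul0r.
by rewrite rmorphM rmorph_nat /=; ring.
Qed.

Lemma sum_tagged_gram (I : finType) (i i' : I) (a b : I -> C) :
  \sum_j ((j == i)%:R * a j)^* * ((j == i')%:R * b j) = (i == i')%:R * ((a i)^* * b i).
Proof.
rewrite -(sum_delta (fun=> (i == i')%:R * ((a i)^* * b i)) i); apply: eq_bigr => j _.
case: eqVneq => [->|_]; last by rewrite !mul0r rmorph0 mul0r.
by rewrite rmorphM rmorph_nat /=; ring.
Qed.

Lemma Re_sum (I : finType) (F : I -> C) : complex.Re (\sum_i F i) = \sum_i complex.Re (F i).
Proof.
have ReD (x y : C) : complex.Re (x + y) = complex.Re x + complex.Re y by case: x; case: y.
exact: (big_morph _ ReD).
Qed.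

Lemma ger0_ReE (x : C) : 0 <= x -> x = (complex.Re x)%:C%C.
Proof. by case: x => a b; rewrite lecE /= => /andP [/eqP -> _]. Qed.

Lemma ger0_Re (x : C) : 0 <= x -> 0 <= complex.Re x.
Proof. by case: x => a b; rewrite lecE /= => /andP [_ ->]. Qed.

Lemma vN_entropyE (T : finType) (rho : op R T) :
  vN_entropy rho = - \sum_l xlnx (complex.Re (eigval rho l)).
Proof. by []. Qed.

Lemma eq_opmx (T : finType) (rho sigma : op R T) :
  (forall s t, rho s t = sigma s t) -> opmx rho = opmx sigma.
Proof. by move=> rho_sigma; apply/matrixP => i j; rewrite !mxE. Qed.

Lemma eq_vN_entropy (T : finType) (rho sigma : op R T) :
  (forall s t, rho s t = sigma s t) -> vN_entropy rho = vN_entropy sigma.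
Proof. by move=> /eq_opmx rho_sigma; rewrite /vN_entropy rho_sigma. Qed.

Lemma opmx_outer (K T : finType) (v : K -> T -> C) : opmx (outer v) = vecs_mx v *m (vecs_mx v)^t*.
Proof.
by apply/matrixP=> i j; rewrite !mxE /outer sum_enum_val; apply: eq_bigr => l _; rewrite !mxE.
Qed.

Lemma opmx_gram (K T : finType) (v : K -> T -> C) : opmx (gram v) = (vecs_mx v)^t* *m vecs_mx v.
Proof.
by apply/matrixP=> i j; rewrite !mxE /gram sum_enum_val; apply: eq_bigr => l _; rewrite !mxE.
Qed.

Lemma vN_entropy_outer_gram (K T : finType) (v : K -> T -> C) :
  vN_entropy (outer v) = vN_entropy (gram v).
Proof.
rewrite /vN_entropy opmx_outer opmx_gram; congr (- _).
apply: (sum_spectral_diag_char_poly (f := fun x => complex.Re x * ln (complex.Re x))).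
- by rewrite mul0r.
- exact: mulmx_trmxC_normal.
- by have := mulmx_trmxC_normal ((vecs_mx v)^t*); rewrite trmxCK.
- exact: char_poly_mulmxC.
Qed.

Lemma vN_entropy_outer_conjT (K T : finType) (v : K -> T -> C) :
  vN_entropy (outer v) = vN_entropy (outer (fun t k => (v k t)^*)).
Proof.
rewrite vN_entropy_outer_gram; apply: eq_vN_entropy => k k'.
by apply: eq_bigr => t _; rewrite conjCK.
Qed.

Lemma vN_entropy_diag (T : finType) (d : T -> C) :
  vN_entropy (fun s t => (s == t)%:R * d s) = - \sum_t xlnx (complex.Re (d t)).
Proof.
rewrite /vN_entropy; congr (- _).
pose r : 'rV[C]_#|T| := \row_j d (enum_val j).
have -> : opmx (fun s t => (s == t)%:R * d s) = diag_mx r.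
  apply/matrixP=> i j; rewrite !mxE (inj_eq enum_val_inj).
  by case: eqP => [->|]; rewrite ?mul1r ?mul0r.
rewrite (sum_spectral_diag_seq (f := fun x => complex.Re x * ln (complex.Re x))
   (k := 0) (s := [seq d (enum_val j) | j <- enum 'I_#|T|])).
- by rewrite big_map big_enum [RHS]sum_enum_val.
- by rewrite mul0r.
- by apply/normalmxP; rewrite tr_diag_mx map_diag_mx diag_mxC.
- rewrite expr0 mul1r char_poly_trig ?big_map ?big_enum.
    by apply: eq_bigr => j _; rewrite !mxE eqxx.
  exact/is_diag_mx_is_trig/diag_mx_is_diag.
Qed.

Lemma dotvC (T : finType) (f g : T -> C) : dotv g f = (dotv f g)^*.
Proof. by rewrite /dotv rmorph_sum; apply: eq_bigr => t _; rewrite rmorphM /= conjCK mulrC. Qed.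

Lemma selfadjoint_outer (K T : finType) (v : K -> T -> C) : selfadjoint (outer v).
Proof.
move=> s t; rewrite /outer rmorph_sum.
by apply: eq_bigr => k _; rewrite rmorphM /= conjCK mulrC.
Qed.

Lemma selfadjoint_normalmx (T : finType) (rho : op R T) :
  selfadjoint rho -> opmx rho \is normalmx.
Proof.
move=> rhoH; apply/normalmxP.
by rewrite (_ : (opmx rho)^t* = opmx rho) // -matrixP => i j; rewrite !mxE rhoH conjCK.
Qed.

Lemma selfadjoint_spectral_decomp (T : finType) (rho : op R T) : selfadjoint rho ->
  forall s t, rho s t = \sum_l eigval rho l * eigvec rho l s * (eigvec rho l t)^*.
Proof.
move=> /selfadjoint_normalmx /orthomx_spectralP rhoE s t.
have /(congr1 (fun M : 'M_#|T| => M (enum_rank s) (enum_rank t))) := rhoE.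
rewrite !mxE !enum_rankK => ->.
rewrite invmx_unitary ?spectral_unitarymx // mul_mx_diag.
by apply: eq_bigr => l _; rewrite /eigvec /eigval !mxE conjCK; ring.
Qed.

Lemma eigvec_orthonormal (T : finType) (rho : op R T) l l' :
  dotv (eigvec rho l) (eigvec rho l') = (l == l')%:R.
Proof.
have /(congr1 (fun M : 'M_#|T| => M l l')) := unitarymxP (spectral_unitarymx (opmx rho)).
rewrite !mxE => <-; rewrite /dotv sum_enum_val.
by apply: eq_bigr => j _; rewrite /eigvec enum_valK !mxE conjCK.
Qed.

Lemma eigvec_complete (T : finType) (rho : op R T) s t :
  \sum_l eigvec rho l s * (eigvec rho l t)^* = (s == t)%:R.
Proof.
have /mulmx1C := unitarymxP (spectral_unitarymx (opmx rho)).
move=> /(congr1 (fun M : 'M_#|T| => M (enum_rank s) (enum_rank t))).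
rewrite !mxE (inj_eq enum_rank_inj) => <-.
by apply: eq_bigr => j _; rewrite /eigvec !mxE conjCK.
Qed.

Lemma eq_qform (T : finType) (rho sigma : op R T) f g :
  (forall s t, rho s t = sigma s t) -> qform rho f g = qform sigma f g.
Proof. by move=> rho_sigma; apply: eq_bigr => s _; apply: eq_bigr => t _; rewrite rho_sigma. Qed.

Lemma qform_sum (I T : finType) (P : I -> op R T) f g :
  qform (fun s t => \sum_i P i s t) f g = \sum_i qform (P i) f g.
Proof.
rewrite /qform [RHS]exchange_big; apply: eq_bigr => s _; rewrite [RHS]exchange_big.
by apply: eq_bigr => t _; rewrite mulr_sumr mulr_suml.
Qed.

Lemma qform_weighted_outer (L T : finType) (lam : L -> C) (w : L -> T -> C) f g :
  qform (fun s t => \sum_l lam l * w l s * (w l t)^*) f g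
  = \sum_l lam l * dotv f (w l) * dotv (w l) g.
Proof.
rewrite qform_sum; apply: eq_bigr => l _.
rewrite /qform /dotv -mulrA big_distrlr mulr_sumr; apply: eq_bigr => s _.
by rewrite mulr_sumr; apply: eq_bigr => t _ /=; ring.
Qed.

Lemma qform1 (T : finType) (f g : T -> C) : qform (fun s t => (s == t)%:R) f g = dotv f g.
Proof.
apply: eq_bigr => s _; rewrite (bigD1 s) //= eqxx mulr1 big1 ?addr0 // => t.
by rewrite eq_sym => /negPf ->; rewrite mulr0 mul0r.
Qed.

Lemma qform_outer (K T : finType) (w : K -> T -> C) f :
  qform (outer w) f f = \sum_k `|dotv f (w k)| ^+ 2.
Proof.
rewrite (eq_qform _ _ (rho := outer w) (sigma := fun s t => \sum_k 1 * w k s * (w k t)^*)).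
  by rewrite qform_weighted_outer; apply: eq_bigr => k _; rewrite mul1r normCK dotvC conjCK.
by move=> s t; apply: eq_bigr => k _; rewrite mul1r.
Qed.

Lemma qform_selfadjoint (T : finType) (rho : op R T) f g : selfadjoint rho ->
  qform rho f g = \sum_l eigval rho l * dotv f (eigvec rho l) * dotv (eigvec rho l) g.
Proof.
by move=> /selfadjoint_spectral_decomp rhoE; rewrite -qform_weighted_outer; exact: eq_qform.
Qed.

Lemma qform_eigvec (T : finType) (rho : op R T) l : selfadjoint rho ->
  qform rho (eigvec rho l) (eigvec rho l) = eigval rho l.
Proof.
move=> /qform_selfadjoint ->; rewrite -[RHS](sum_delta _ l); apply: eq_bigr => l' _.
by rewrite !eigvec_orthonormal eq_sym; case: eqP => _; rewrite ?mulr1 ?mul1r ?mulr0 ?mul0r.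
Qed.

Lemma eigval_outer_ge0 (K T : finType) (v : K -> T -> C) l : 0 <= eigval (outer v) l.
Proof.
rewrite -qform_eigvec ?qform_outer; last exact: selfadjoint_outer.
by rewrite sumr_ge0 // => k _; rewrite exprn_ge0.
Qed.

Lemma qform_delta (T : finType) (rho : op R T) j k :
  qform rho (fun u => (u == j)%:R) (fun u => (u == k)%:R) = rho j k.
Proof.
rewrite /qform -[RHS](sum_delta (fun s => rho s k) j); apply: eq_bigr => s _.
rewrite -[rho s k](sum_delta (rho s) k) mulr_sumr; apply: eq_bigr => t _.
by rewrite rmorph_nat; ring.
Qed.

Lemma delta_orthonormal (T : finType) (j j' : T) :
  dotv (fun u => (u == j)%:R) (fun u => (u == j')%:R) = (j == j')%:R :> C.
Proof.
rewrite /dotv -[RHS](sum_delta (fun u => (u == j')%:R) j).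
by apply: eq_bigr => u _; rewrite rmorph_nat.
Qed.

Lemma delta_complete (T : finType) (s t : T) :
  \sum_j (s == j)%:R * ((t == j)%:R)^* = (s == t)%:R :> C.
Proof.
rewrite eq_sym -(sum_delta (fun j => (t == j)%:R) s); apply: eq_bigr => j _.
by rewrite rmorph_nat eq_sym.
Qed.

Lemma sum_qform_complete (T J : finType) (rho : op R T) (f : J -> T -> C) :
  (forall s t, \sum_j f j s * (f j t)^* = (s == t)%:R) ->
  \sum_j qform rho (f j) (f j) = \sum_t rho t t.
Proof.
move=> f_complete; rewrite /qform exchange_big; apply: eq_bigr => s _.
rewrite exchange_big -[RHS](sum_delta (rho s) s); apply: eq_bigr => t _.
by rewrite -f_complete mulr_suml; apply: eq_bigr => j _; ring.
Qed.

Lemma vN_entropy_orthonormal (L T : finType) (lam : L -> C) (w : L -> T -> C) :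
  (forall l, 0 <= lam l) -> (forall l l', dotv (w l) (w l') = (l == l')%:R) ->
  vN_entropy (fun s t => \sum_l lam l * w l s * (w l t)^*)
  = - \sum_l xlnx (complex.Re (lam l)).
Proof.
move=> lam_ge0 w_orth.
have sqrtC_conj l : (sqrtC (lam l))^* = sqrtC (lam l) by rewrite geC0_conj ?sqrtC_ge0.
pose y l t := sqrtC (lam l) * w l t.
rewrite (eq_vN_entropy (sigma := outer y)); last first.
  move=> s t; apply: eq_bigr => l _; rewrite /y rmorphM /= sqrtC_conj.
  by rewrite -{1}[lam l]sqrtCK; ring.
rewrite vN_entropy_outer_gram -vN_entropy_diag; apply: eq_vN_entropy => l l'.
rewrite /gram /y (eq_bigr (fun t => sqrtC (lam l) * sqrtC (lam l') * ((w l t)^* * w l' t))).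
  rewrite -mulr_sumr -/(dotv (w l) (w l')) w_orth.
  case: eqP => [<-|_]; last by rewrite !mulr0 mul0r.
  by rewrite -expr2 sqrtCK mulr1 mul1r.
by move=> t _; rewrite rmorphM /= sqrtC_conj; ring.
Qed.

(* Schur concavity: [W l j = |<f_j, e_l>|^2] is doubly stochastic and the diagonal entries of
   [rho] in the basis [f] are [W]-averages of its eigenvalues, so Jensen applies. *)
Lemma sum_xlnx_qform_le (T J : finType) (rho : op R T) (f : J -> T -> C) :
  selfadjoint rho -> (forall l, 0 <= eigval rho l) ->
  (forall j j', dotv (f j) (f j') = (j == j')%:R) ->
  (forall s t, \sum_j f j s * (f j t)^* = (s == t)%:R) ->
  \sum_j xlnx (complex.Re (qform rho (f j) (f j)))
    <= \sum_l xlnx (complex.Re (eigval rho l)).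
Proof.
move=> rhoH lam_ge0 f_orth f_complete.
pose e := eigvec rho; pose lam l := complex.Re (eigval rho l).
pose W l j := complex.Re (`|dotv (f j) (e l)| ^+ 2).
have W_ge0 l j : 0 <= W l j by apply: ger0_Re; rewrite exprn_ge0.
have WE l j : `|dotv (f j) (e l)| ^+ 2 = (W l j)%:C%C by apply: ger0_ReE; rewrite exprn_ge0.
have lamE l : eigval rho l = (lam l)%:C%C by exact: ger0_ReE.
have qformE j : complex.Re (qform rho (f j) (f j)) = \sum_l W l j * lam l.
  rewrite qform_selfadjoint // Re_sum; apply: eq_bigr => l _.
  rewrite -mulrA -[dotv (e l) (f j)]conjCK -dotvC -normCK WE lamE.
  by rewrite /= !mulr0 subr0 mulrC.
have sum_W_l j : \sum_l W l j = 1.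
  rewrite -Re_sum (_ : \sum_l _ = 1) //.
  transitivity (qform (fun s t => \sum_l 1 * e l s * (e l t)^*) (f j) (f j)).
    by rewrite qform_weighted_outer; apply: eq_bigr => l _; rewrite mul1r normCK dotvC conjCK.
  rewrite (eq_qform _ _ (sigma := fun s t => (s == t)%:R)) ?qform1 ?f_orth ?eqxx // => s t.
  by rewrite -(eigvec_complete rho); apply: eq_bigr => l _; rewrite mul1r.
have sum_W_j l : \sum_j W l j = 1.
  rewrite -Re_sum (_ : \sum_j _ = 1) //.
  transitivity (qform (fun s t => \sum_j 1 * f j s * (f j t)^*) (e l) (e l)).
    by rewrite qform_weighted_outer; apply: eq_bigr => j _; rewrite mul1r normCK -dotvC mulrC.
  rewrite (eq_qform _ _ (sigma := fun s t => (s == t)%:R)) ?qform1 ?eigvec_orthonormal //.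
    by rewrite eqxx.
  move=> s t.
  by rewrite -f_complete; apply: eq_bigr => j _; rewrite mul1r.
under eq_bigr do rewrite qformE.
have -> : \sum_l xlnx (lam l) = \sum_j \sum_l W l j * xlnx (lam l).
  by rewrite exchange_big; apply: eq_bigr => l _; rewrite -mulr_suml sum_W_j mul1r.
by apply: ler_sum => j _; apply: xlnx_convex => // l; exact: ger0_Re.
Qed.

Lemma vN_entropy_block (I T : finType) (beta : I -> op R T) :
  (forall i, selfadjoint (beta i)) -> (forall i l, 0 <= eigval (beta i) l) ->
  vN_entropy (fun u u' : I * T => (u.1 == u'.1)%:R * beta u.1 u.2 u'.2)
  = \sum_i vN_entropy (beta i).
Proof.
move=> betaH beta_ge0.
pose w (p : I * 'I_#|T|) (u : I * T) := (u.1 == p.1)%:R * eigvec (beta p.1) p.2 u.2.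
rewrite (eq_vN_entropy (sigma := fun u u' =>
    \sum_p eigval (beta p.1) p.2 * w p u * (w p u')^*)).
  rewrite vN_entropy_orthonormal; first by rewrite sum_pair -sumrN.
  - by move=> p; exact: beta_ge0.
  move=> [i l] [i' l']; rewrite /dotv sum_pair /= xpair_eqE.
  rewrite (eq_bigr (fun j => (j == i)%:R *
      ((i == i')%:R * dotv (eigvec (beta i) l) (eigvec (beta i') l')))).
    rewrite sum_delta; have [<-|ii'] := eqVneq i i'; last by rewrite mul0r.
    by rewrite mul1r eigvec_orthonormal.
  move=> j _; have [->|ji] := eqVneq j i; last first.
    by rewrite mul0r big1 // => t _; rewrite /w /= (negPf ji) mul0r rmorph0 mul0r.
  rewrite mul1r mulr_sumr; apply: eq_bigr => t _.
  by rewrite /w /= eqxx rmorphM rmorph_nat /=; ring.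
move=> [i1 t1] [i2 t2] /=; rewrite sum_pair.
rewrite -(sum_delta (fun=> (i1 == i2)%:R * beta i1 t1 t2) i1); apply: eq_bigr => i _.
have [->|ne] := eqVneq i i1; last first.
  by rewrite mul0r big1 // => l _; rewrite /w /= eq_sym (negPf ne) mul0r mulr0 mul0r.
rewrite mul1r (selfadjoint_spectral_decomp (betaH i1)) mulr_sumr; apply: eq_bigr => l _.
by rewrite /w /= eqxx mul1r rmorphM /= rmorph_nat eq_sym; ring.
Qed.

(* Stacking the spectral decompositions of the summands gives a family [y] with
   [outer y = sum_i outer (v i)]; the Gram matrix of [y] has the same entropy and its diagonal
   lists all the eigenvalues of the summands, so Schur concavity applies to it. *)
Lemma vN_entropy_sum_outer_le (I K T : finType) (v : I -> K -> T -> C) :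
  vN_entropy (fun s t => \sum_i outer (v i) s t) <= \sum_i vN_entropy (outer (v i)).
Proof.
pose lam (p : I * 'I_#|T|) := eigval (outer (v p.1)) p.2.
pose e (p : I * 'I_#|T|) := eigvec (outer (v p.1)) p.2.
have sqrtC_conj p : (sqrtC (lam p))^* = sqrtC (lam p).
  by rewrite geC0_conj ?sqrtC_ge0 ?eigval_outer_ge0.
pose y p t := sqrtC (lam p) * e p t.
rewrite (eq_vN_entropy (sigma := outer y)); last first.
  move=> s t; rewrite [RHS]/outer sum_pair; apply: eq_bigr => i _.
  rewrite (selfadjoint_spectral_decomp (selfadjoint_outer (v i))); apply: eq_bigr => l _.
  by rewrite /y rmorphM /= sqrtC_conj mulrACA -expr2 sqrtCK mulrA.
pose z t p := (y p t)^*.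
rewrite vN_entropy_outer_gram (eq_vN_entropy (sigma := outer z)); last first.
  by move=> p p'; apply: eq_bigr => t _; rewrite /z conjCK.
have := sum_xlnx_qform_le (f := fun p u => (u == p)%:R) (selfadjoint_outer z)
  (eigval_outer_ge0 z) (@delta_orthonormal _) (@delta_complete _).
rewrite -lerN2 -!vN_entropyE => /le_trans; apply.
rewrite sumrN lerN2 sum_pair; apply: ler_sum => i _; apply: ler_sum => l _.
rewrite qform_delta le_eqVlt; apply/predU1P; left; congr (xlnx (complex.Re _)).
rewrite [RHS](eq_bigr (fun t => sqrtC (lam (i, l)) * sqrtC (lam (i, l)) *
    ((e (i, l) t)^* * e (i, l) t))); last first.
  by move=> t _; rewrite /z /y conjCK rmorphM /= sqrtC_conj; ring.
by rewrite -mulr_sumr -/(dotv _ _) eigvec_orthonormal eqxx mulr1 -expr2 sqrtCK.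
Qed.

(* In the eigenbasis [f] of the sum, [d i j = <f_j, outer (v i) f_j>] is a joint distribution
   with marginals [p] and the spectrum of the sum; combine its subadditivity with Schur
   concavity for each summand. *)
Lemma sum_vN_entropy_outer_le (I K T : finType) (v : I -> K -> T -> C) (p : I -> R) :
  (forall i, p i = complex.Re (\sum_t outer (v i) t t)) -> \sum_i p i = 1 ->
  \sum_i vN_entropy (outer (v i))
    <= vN_entropy (fun s t => \sum_i outer (v i) s t) - \sum_i xlnx (p i).
Proof.
move=> pE p1; pose Q : op R T := fun s t => \sum_i outer (v i) s t.
have QE s t : Q s t = outer (fun ik : I * K => v ik.1 ik.2) s t by rewrite /Q /outer sum_pair.
have QH : selfadjoint Q by move=> s t; rewrite !QE selfadjoint_outer.
have Q_ge0 l : 0 <= eigval Q l.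
  by rewrite /eigval (eq_opmx QE); exact: eigval_outer_ge0.
pose f := eigvec Q; pose d i j := complex.Re (qform (outer (v i)) (f j) (f j)).
have d_ge0 i j : 0 <= d i j.
  by apply: ger0_Re; rewrite qform_outer sumr_ge0 // => k _; rewrite exprn_ge0.
have sum_d_i j : \sum_i d i j = complex.Re (eigval Q j).
  by rewrite -Re_sum -qform_sum -/Q qform_eigvec.
have sum_d_j i : \sum_j d i j = p i.
  by rewrite -Re_sum sum_qform_complete ?pE // => s t; exact: eigvec_complete.
have := xlnx_subadditive d_ge0 (etrans (eq_bigr _ (fun i _ => sum_d_j i)) p1).
under eq_bigr do rewrite sum_d_j; under [X in _ + X]eq_bigr do rewrite sum_d_i.
have diag_le i : \sum_j xlnx (d i j) <= - vN_entropy (outer (v i)).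
  rewrite vN_entropyE opprK; apply: sum_xlnx_qform_le.
  - exact: selfadjoint_outer.
  - exact: eigval_outer_ge0.
  - exact: eigvec_orthonormal.
  - exact: eigvec_complete.
have : \sum_i \sum_j xlnx (d i j) <= \sum_i - vN_entropy (outer (v i)).
  by apply: ler_sum => i _; exact: diag_le.
rewrite sumrN (vN_entropyE Q) -/Q; lra.
Qed.

Lemma vN_entropy_outer_blocks (I J K T : finType)
    (x : I * K -> T -> C) (w : I -> J -> K -> C) :
  (forall p p', gram x p p' = (p.1 == p'.1)%:R * outer (w p.1) p.2 p'.2) ->
  vN_entropy (outer x) = \sum_i vN_entropy (outer (w i)).
Proof.
move=> /eq_vN_entropy gramE; rewrite vN_entropy_outer_gram gramE.
by apply: vN_entropy_block => i; [exact: selfadjoint_outer | exact: eigval_outer_ge0].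
Qed.

Lemma vN_entropy_ketbra (T : finType) (phi : T -> C) :
  \sum_t `|phi t| ^+ 2 = 1 -> vN_entropy (ketbra phi) = 0.
Proof.
move=> phi_normalized.
rewrite (eq_vN_entropy (sigma := outer (fun _ : 'I_1 => phi))) => [|s t]; last first.
  by rewrite /outer big_ord1.
rewrite vN_entropy_outer_gram (eq_vN_entropy (sigma := fun i i' : 'I_1 => (i == i')%:R * 1)).
  by rewrite vN_entropy_diag big_ord1 /xlnx ln1 mulr0 oppr0.
move=> i i'; rewrite !ord1 eqxx mul1r -phi_normalized.
by apply: eq_bigr => t _; rewrite normCKC.
Qed.

End Operators.

Section Measurement.
Variables (R : realType) (A B Cs : finType) (k : nat).
Local Notation C := (R[i]).
Variables (psi : (A * B * Cs)%type -> C) (M : 'I_k -> op R B).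
Local Notation v := (apply_kraus M psi).
Local Notation rho := (post_meas_state M psi).

Lemma vN_entropy_post_meas_state :
  vN_entropy rho = - \sum_i xlnx (outcome_prob M psi i).
Proof.
pose u i (s : A * (B * 'I_k) * Cs) := (s.1.2.2 == i)%:R * v i (s.1.1, s.1.2.1, s.2).
rewrite (eq_vN_entropy (sigma := outer u)); last by move=> s t; rewrite /outer sum_tagged_outer.
rewrite vN_entropy_outer_gram -vN_entropy_diag; apply: eq_vN_entropy => i i'.
rewrite /gram sum_triple [in RHS]sum_triple mulr_sumr; apply: eq_bigr => a _.
rewrite sum_pair mulr_sumr; apply: eq_bigr => b _.
rewrite exchange_big mulr_sumr; apply: eq_bigr => c _.
by rewrite sum_tagged_gram /= normCKC; case: eqP => [->|_]; rewrite ?mul0r.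
Qed.

(* [outer (sliceC phi)] is the complex conjugate of the reduced operator of [ketbra phi] on
   [Cs], hence has the same entropy; likewise [sliceA] for [A] and [sliceAC] for [A * Cs]. *)
Definition sliceC (phi : A * B * Cs -> C) : A * B -> Cs -> C :=
  fun ab c => (phi (ab, c))^*.
Definition sliceA (phi : A * B * Cs -> C) : B * Cs -> A -> C :=
  fun bc a => (phi (a, bc.1, bc.2))^*.
Definition sliceAC (phi : A * B * Cs -> C) : B -> A * Cs -> C :=
  fun b ac => (phi (ac.1, b, ac.2))^*.

Lemma outer_sliceC phi c c' :
  outer (sliceC phi) c c' = \sum_a \sum_b (phi (a, b, c))^* * phi (a, b, c').
Proof. by rewrite /outer sum_pair; do 2 apply: eq_bigr => ? _; rewrite conjCK. Qed.

Lemma outer_sliceA phi a a' :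
  outer (sliceA phi) a a' = \sum_c \sum_b (phi (a, b, c))^* * phi (a', b, c).
Proof. by rewrite /outer sum_pair exchange_big; do 2 apply: eq_bigr => ? _; rewrite conjCK. Qed.

Lemma outer_sliceAC phi ac ac' :
  outer (sliceAC phi) ac ac' = \sum_b (phi (ac.1, b, ac.2))^* * phi (ac'.1, b, ac'.2).
Proof. by apply: eq_bigr => b _; rewrite conjCK. Qed.

Lemma trace_outer_sliceC phi : \sum_c outer (sliceC phi) c c = \sum_t `|phi t| ^+ 2.
Proof.
under eq_bigr do rewrite outer_sliceC.
rewrite sum_triple exchange_big; apply: eq_bigr => a _; rewrite exchange_big.
by do 2 apply: eq_bigr => ? _; rewrite normCKC.
Qed.

Lemma trace_outer_sliceA phi : \sum_a outer (sliceA phi) a a = \sum_t `|phi t| ^+ 2.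
Proof.
rewrite sum_triple; apply: eq_bigr => a _; rewrite outer_sliceA exchange_big.
by do 2 apply: eq_bigr => ? _; rewrite normCKC.
Qed.

(* Each marginal of [rho] containing the register is [outer x] for a family [x] tagged by
   the outcome, so that the Gram matrix of [x] is block diagonal in the outcome. *)
Lemma vN_entropy_ptr_XY_post :
  vN_entropy (ptr_XY rho) = \sum_i vN_entropy (outer (sliceC (v i))).
Proof.
pose x (ic : 'I_k * Cs) (u : A * (B * 'I_k)) := (u.2.2 == ic.1)%:R * v ic.1 (u.1, u.2.1, ic.2).
rewrite (eq_vN_entropy (sigma := outer x)) => [|u u'].
  apply: vN_entropy_outer_blocks => -[i c] [i' c']; rewrite /gram outer_sliceC mulr_sumr sum_pair.
  apply: eq_bigr => a _; rewrite sum_pair mulr_sumr; apply: eq_bigr => b _.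
  by rewrite sum_tagged_gram /=; case: eqVneq => [<-|]; rewrite ?mul0r.
rewrite /outer sum_pair exchange_big; apply: eq_bigr => c _.
by rewrite sum_tagged_outer.
Qed.

Lemma vN_entropy_ptr_YZ_post :
  vN_entropy (ptr_YZ rho) = \sum_i vN_entropy (outer (sliceA (v i))).
Proof.
pose x (ia : 'I_k * A) (u : B * 'I_k * Cs) := (u.1.2 == ia.1)%:R * v ia.1 (ia.2, u.1.1, u.2).
rewrite (eq_vN_entropy (sigma := outer x)) => [|u u'].
  apply: vN_entropy_outer_blocks => -[i a] [i' a']; rewrite /gram outer_sliceA.
  rewrite exchange_big mulr_sumr sum_triple; apply: eq_bigr => b _.
  rewrite exchange_big mulr_sumr; apply: eq_bigr => c _.
  by rewrite sum_tagged_gram /=; case: eqVneq => [<-|]; rewrite ?mul0r.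
rewrite /outer sum_pair exchange_big; apply: eq_bigr => a _.
by rewrite sum_tagged_outer.
Qed.

Lemma vN_entropy_ptr_Y_post :
  vN_entropy (ptr_Y rho) = \sum_i vN_entropy (outer (sliceAC (v i))).
Proof.
pose x (p : 'I_k * (A * Cs)) (u : B * 'I_k) := (u.2 == p.1)%:R * v p.1 (p.2.1, u.1, p.2.2).
rewrite (eq_vN_entropy (sigma := outer x)) => [|u u'].
  apply: vN_entropy_outer_blocks => -[i [a c]] [i' [a' c']].
  rewrite /gram outer_sliceAC mulr_sumr sum_pair; apply: eq_bigr => b _.
  by rewrite sum_tagged_gram /=; case: eqVneq => [<-|]; rewrite ?mul0r.
rewrite /outer sum_pair [RHS]exchange_big sum_pair; do 2 apply: eq_bigr => ? _.
by rewrite sum_tagged_outer.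
Qed.

Lemma vN_entropy_ptr_XY_ketbra phi :
  vN_entropy (ptr_XY (ketbra phi)) = vN_entropy (outer (sliceC phi)).
Proof.
rewrite (eq_vN_entropy (sigma := outer (fun c ab => phi (ab, c)))) => [|s t //].
by rewrite vN_entropy_outer_conjT; apply: eq_vN_entropy.
Qed.

Lemma vN_entropy_ptr_YZ_ketbra phi :
  vN_entropy (ptr_YZ (ketbra phi)) = vN_entropy (outer (sliceA phi)).
Proof.
rewrite (eq_vN_entropy (sigma := outer (fun a bc => phi (a, bc.1, bc.2)))) => [|s t //].
by rewrite vN_entropy_outer_conjT; apply: eq_vN_entropy.
Qed.

Lemma vN_entropy_ptr_Y_ketbra phi :
  vN_entropy (ptr_Y (ketbra phi)) = vN_entropy (outer (sliceAC phi)).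
Proof.
rewrite (eq_vN_entropy (sigma := outer (fun ac b => phi (ac.1, b, ac.2)))) => [|s t].
  by rewrite vN_entropy_outer_conjT; apply: eq_vN_entropy.
by rewrite /outer sum_pair.
Qed.

Hypothesis kraus_complete : forall b1 b2 : B,
  \sum_(i < k) \sum_(b : B) (M i b b1)^* * M i b b2 = (b1 == b2)%:R.

Lemma sum_apply_kraus_traceB a c a' c' :
  \sum_i \sum_b (v i (a, b, c))^* * v i (a', b, c')
  = \sum_b (psi (a, b, c))^* * psi (a', b, c').
Proof.
have expand i b : (v i (a, b, c))^* * v i (a', b, c')
    = \sum_b0 \sum_b1 (M i b b0)^* * M i b b1 * ((psi (a, b0, c))^* * psi (a', b1, c')).
  rewrite /apply_kraus rmorph_sum big_distrlr; apply: eq_bigr => b0 _.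
  by apply: eq_bigr => b1 _; rewrite /= rmorphM; ring.
under eq_bigr => i _ do under eq_bigr => b _ do rewrite expand.
under eq_bigr => i _ do rewrite exchange_big.
rewrite exchange_big; apply: eq_bigr => b0 _.
under eq_bigr => i _ do rewrite exchange_big.
rewrite exchange_big -(sum_delta (fun b1 => (psi (a, b0, c))^* * psi (a', b1, c')) b0).
apply: eq_bigr => b1 _; rewrite eq_sym -kraus_complete mulr_suml.
by apply: eq_bigr => i _; rewrite mulr_suml.
Qed.

Lemma outer_sliceC_kraus c c' : outer (sliceC psi) c c' = \sum_i outer (sliceC (v i)) c c'.
Proof.
under [RHS]eq_bigr do rewrite outer_sliceC.
by rewrite outer_sliceC [RHS]exchange_big; apply: eq_bigr => a _; rewrite sum_apply_kraus_traceB.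
Qed.

Lemma outer_sliceA_kraus a a' : outer (sliceA psi) a a' = \sum_i outer (sliceA (v i)) a a'.
Proof.
under [RHS]eq_bigr do rewrite outer_sliceA.
by rewrite outer_sliceA [RHS]exchange_big; apply: eq_bigr => c _; rewrite sum_apply_kraus_traceB.
Qed.

Lemma outer_sliceAC_kraus ac ac' :
  outer (sliceAC psi) ac ac' = \sum_i outer (sliceAC (v i)) ac ac'.
Proof.
under [RHS]eq_bigr do rewrite outer_sliceAC.
by rewrite outer_sliceAC sum_apply_kraus_traceB.
Qed.

Lemma sum_outcome_prob : \sum_t `|psi t| ^+ 2 = 1 -> \sum_i outcome_prob M psi i = 1.
Proof.
move=> psi_normalized; rewrite /outcome_prob -Re_sum.
under eq_bigr do rewrite -trace_outer_sliceC.
rewrite exchange_big; under eq_bigr do rewrite -outer_sliceC_kraus.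
by rewrite trace_outer_sliceC psi_normalized.
Qed.

End Measurement.

Theorem mainTheorem5 (R : realType) (A B Cs : finType) (k : nat)
    (psi : (A * B * Cs)%type -> R[i]) (M : 'I_k -> op R B)
    (psi_normalized : \sum_(t : (A * B * Cs)%type) `|psi t| ^+ 2 = 1)
    (kraus_complete : forall b1 b2 : B,
        \sum_(i < k) \sum_(b : B) (M i b b1)^* * M i b b2
        = (b1 == b2)%:R) :
  let rho := post_meas_state M psi in
  let p := outcome_prob M psi in
  qcmi rho - qcmi (ketbra psi) <= vN_entropy rho /\
  vN_entropy rho = - \sum_(i < k) p i * ln (p i).
Proof.
move=> rho p; have S_rho := vN_entropy_post_meas_state psi M.
split; last exact: S_rho.
pose v := apply_kraus M psi.
have p1 : \sum_i p i = 1 by exact: sum_outcome_prob.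
have pC i : p i = complex.Re (\sum_c outer (sliceC (v i)) c c) by rewrite trace_outer_sliceC.
have pA i : p i = complex.Re (\sum_a outer (sliceA (v i)) a a) by rewrite trace_outer_sliceA.
have S_C := sum_vN_entropy_outer_le pC p1.
have S_A := sum_vN_entropy_outer_le pA p1.
have S_AC := vN_entropy_sum_outer_le (fun i => sliceAC (v i)).
rewrite /qcmi vN_entropy_ptr_XY_post vN_entropy_ptr_YZ_post vN_entropy_ptr_Y_post.
rewrite vN_entropy_ptr_XY_ketbra vN_entropy_ptr_YZ_ketbra vN_entropy_ptr_Y_ketbra.
rewrite vN_entropy_ketbra // (eq_vN_entropy (outer_sliceC_kraus psi kraus_complete)).
rewrite (eq_vN_entropy (outer_sliceA_kraus psi kraus_complete)).
rewrite (eq_vN_entropy (outer_sliceAC_kraus psi kraus_complete)) -/rho S_rho.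
lra.
Qed.
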